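(* For a biconnected $K_4$-minor-free graph $G$, the following statements are equivalent: (1) For some $v\in V(G)$, $G$ has a $1$-perfect orientation in which $v$ is a sink. (2) For every $v\in V(G)$, $G$ has a $1$-perfect orientation in which $v$ is a sink. (3) $G$ is chordal. (4) $G$ is either $K_1$ or a $2$-tree.
   Context: A graph is biconnected if it is connected and has no cut vertex. An orientation of $G$ is $1$-perfect if for every vertex the out-neighborhood is a clique in $G$. A sink is a vertex of out-degree $0$. A graph is chordal if it has no induced cycle of length at least $4$. $2$-trees: $K_2$ is a $2$-tree, and adding to a $2$-tree a new vertex adjacent to exactly two adjacent vertices yields a $2$-tree; there are no others. *)

From mathcomp Require Import all_boot.
Set Implicit Arguments. Unset Strict Implicit. Unset Printing Implicit Defensive.

Section Graphs.
Variable T : finType.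

Definition simple_graph (e : rel T) : Prop := symmetric e /\ irreflexive e.

Definition induced_connected (e : rel T) (B : {set T}) : Prop :=
  B != set0 /\
  forall x y, x \in B -> y \in B ->
    connect (fun a b => [&& e a b, a \in B & b \in B]) x y.

Definition connected_graph (e : rel T) : Prop := induced_connected e [set: T].

Definition cut_vertex (e : rel T) (v : T) : Prop :=
  exists x y, [/\ x != v, y != v &
    ~~ connect (fun a b => [&& e a b, a != v & b != v]) x y].

Definition biconnected (e : rel T) : Prop :=
  connected_graph e /\ forall v, ~ cut_vertex e v.

Definition has_K4_minor (e : rel T) : Prop :=
  exists B : 'I_4 -> {set T},
    [/\ forall i, induced_connected e (B i),
        forall i j, i != j -> [disjoint B i & B j] &
        forall i j, i != j -> exists x y, [/\ x \in B i, y \in B j & e x y]].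

Definition orientation (e o : rel T) : Prop :=
  (forall x y, e x y = o x y || o y x) /\ (forall x y, ~~ (o x y && o y x)).

Definition one_perfect (e o : rel T) : Prop :=
  orientation e o /\
  forall v x y, o v x -> o v y -> x != y -> e x y.

Definition sink (o : rel T) (v : T) : Prop := forall y, ~~ o v y.

Definition induced_cycle (e : rel T) (s : seq T) : Prop :=
  [/\ uniq s, 4 <= size s &
      forall i j, i < size s -> j < size s ->
        forall x0 : T,
        e (nth x0 s i) (nth x0 s j) = ((j == (i.+1 %% size s)) || (i == (j.+1 %% size s)))].

Definition chordal (e : rel T) : Prop := forall s, ~ induced_cycle e s.

(* 2-trees, built on vertex sets V (the graph being the induced subgraph G[V]). *)
Inductive two_tree_on (e : rel T) : {set T} -> Prop :=
  | tt_base x y : x != y -> e x y -> two_tree_on e [set x; y]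
  | tt_step V x y z : two_tree_on e V -> x \in V -> y \in V -> e x y ->
      z \notin V -> (forall w, w \in V -> e z w = (w == x) || (w == y)) ->
      two_tree_on e (z |: V).

Definition two_tree (e : rel T) : Prop := two_tree_on e [set: T].

Definition is_K1 : Prop := #|T| = 1.

End Graphs.

(* In a 1-perfect orientation arcs propagate along induced paths: once an arc points
   backwards, all later ones do, since otherwise some vertex would have two non-adjacent
   out-neighbours. Hence every induced cycle C is oriented cyclically, and a vertex w off C
   receiving an arc from C sends an arc back to C, for otherwise w is adjacent to three
   consecutive vertices of C and G has a K4 minor. On a shortest path from a sink to C all
   arcs point towards the sink, and the arc sent back to C by its last vertex off C gives a
   shorter path; so G is chordal.

   Adding a vertex z adjacent to an edge xy keeps an orientation 1-perfect as long as only
   vertices whose out-neighbours lie in {x, y} point to z. Keeping, for every edge ab, an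
   orientation in which a is a sink and the only out-neighbour of b, every 2-tree gets
   1-perfect orientations with any prescribed sink.

   For an edge st of a biconnected chordal graph and a component K of G - s - t, some u in K
   is adjacent to both s and t. A component of K - u sees u and, as there is no K4 minor,
   misses s or t, so it is a smaller component for the edge su or tu. This ends with a vertex
   of degree 2 whose neighbours are adjacent; deleting it keeps the graph biconnected, and
   induction builds the 2-tree. *)

From mathcomp Require Import all_boot zify.
Set Implicit Arguments. Unset Strict Implicit. Unset Printing Implicit Defensive.

Lemma eqn_mod_ltF a b k : a < b < a + k -> (a == b %[mod k]) = false.
Proof.
move=> lt_ab; rewrite (_ : b = a + (b - a)); last by lia.
by rewrite -[X in X == _ %[mod k]]addn0 eqn_modDl mod0n modn_small; lia.
Qed.

Lemma modnSml m d : (m %% d).+1 %% d = m.+1 %% d.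
Proof. by rewrite -addn1 modnDml addn1. Qed.

Section Walks.
Variable T : finType.
Implicit Types (r : rel T) (p : nat -> T).

Definition walk r p m := forall i, i < m -> r (p i) (p i.+1).

Definition induced_path r p m := [/\ walk r p m,
  forall i j, i.+1 < j <= m -> ~~ r (p i) (p j) &
  forall i j, i < j <= m -> p i != p j].

Lemma connect_walk r x y : connect r x y ->
  exists p m, [/\ p 0 = x, p m = y & walk r p m].
Proof.
move/connectP=> [s rs ->]; exists (nth x (x :: s)), (size s); split => //.
- exact: nth_last.
- by move=> i lt_i; apply: (pathP x rs).
Qed.

Lemma walk_connect r p m : walk r p m -> connect r (p 0) (p m).
Proof.
elim: m => [|m IHm] pw; first exact: connect0.
apply: connect_trans (IHm _) (connect1 (pw m _)) => // i lt_im; apply: pw; lia.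
Qed.

Lemma connect_exit r (K : {pred T}) x y : connect r x y -> x \in K -> y \notin K ->
  exists a b, [/\ a \in K, b \notin K & r a b].
Proof.
move/connectP=> [s]; elim: s x => [|c s IHs] x /=; first by move=> _ -> ->.
case/andP=> rxc cs ylast xK yK; case cK: (c \in K); first exact: (IHs c cs ylast cK yK).
by exists x, c; rewrite cK.
Qed.

Lemma walk_extend r p m y : walk r p m -> r (p m) y ->
  walk r (fun l => if l <= m then p l else y) m.+1.
Proof.
move=> pw rpy l lt_l /=; have [lt_lm | ->] : l < m \/ l = m by lia.
  by rewrite ltnW // lt_lm; apply: pw.
by rewrite leqnn ltnn.
Qed.

Lemma walk_skip r p m i d : walk r p m -> i + d < m -> r (p i) (p (i + d).+1) ->
  let q l := p (if l <= i then l else l + d) in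
  [/\ walk r q (m - d), q 0 = p 0 & q (m - d) = p m].
Proof.
move=> pw lt_m jump q; rewrite /q; split => //; last first.
  have -> : (m - d <= i) = false by lia.
  by congr p; lia.
move=> l lt_l; case: ifP => le_li; case: ifP => le_Sli.
- by apply: pw; lia.
- by have -> : l = i by lia.
- lia.
- by rewrite addSn; apply: pw; lia.
Qed.

Lemma induced_path_to r (B : {pred T}) p m : walk r p m -> p m \in B ->
  exists q n, [/\ q 0 = p 0, q n \in B, n <= m, induced_path r q n &
                  forall i, i < n -> q i \notin B].
Proof.
elim/ltn_ind: m p => m IHm p pw pB.
have shorter q n : n < m -> walk r q n -> q 0 = p 0 -> q n \in B ->
    exists q' n', [/\ q' 0 = p 0, q' n' \in B, n' <= m, induced_path r q' n' &
                     forall i, i < n' -> q' i \notin B].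
  move=> lt_nm qw <- qB; have [q' [n' [<- ? le_n ? ?]]] := IHm n lt_nm q qw qB.
  by exists q', n'; split => //; apply: leq_trans le_n (ltnW lt_nm).
case: (boolP [exists i : 'I_m, p i \in B]) => [/existsP[i piB] | /existsPn noB].
  have lt_im := ltn_ord i.
  by apply: (shorter p i) => // j lt_j; apply: pw; lia.
case: (boolP [exists i : 'I_m, exists j : 'I_m.+1, (i.+1 < j) && r (p i) (p j)]) =>
    [/existsP[i /existsP[j /andP[lt_ij chord]]] | /existsPn nochord].
  have lt_im := ltn_ord i; have le_jm : j <= m := ltn_ord j.
  have [||qw q0 qm] := @walk_skip r p m i (j - i.+1) pw; first by lia.
    by have -> : (i + (j - i.+1)).+1 = j by lia.
  by apply: shorter qw q0 _; rewrite ?qm //; lia.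
case: (boolP [exists i : 'I_m, exists j : 'I_m, (i < j) && (p i == p j)]) =>
    [/existsP[i /existsP[j /andP[lt_ij /eqP pij]]] | /existsPn nodup].
  have lt_jm := ltn_ord j.
  have [||qw q0 qm] := @walk_skip r p m i (j - i) pw; first by lia.
    by rewrite (_ : i + (j - i) = j) ?pij; [apply: pw | lia].
  by apply: shorter qw q0 _; rewrite ?qm //; lia.
exists p, m; split=> //; last by move=> i lt_im; apply: (noB (Ordinal lt_im)).
split=> // i j /andP[lt_ij le_jm].
- have lt_im : i < m by lia.
  by have /existsPn/(_ (Ordinal (le_jm : j < m.+1))) := nochord (Ordinal lt_im); rewrite lt_ij.
- have lt_im : i < m by lia.
  have [lt_jm | eq_jm] : j < m \/ j = m by lia.
    by have /existsPn/(_ (Ordinal lt_jm)) := nodup (Ordinal lt_im); rewrite lt_ij.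
  by rewrite eq_jm; apply: contraNneq (noB (Ordinal lt_im)) => ->.
Qed.
End Walks.

Section Graph.
Variables (T : finType) (e : rel T).
Hypotheses (esym : symmetric e) (eirr : irreflexive e).

Section InducedSubgraphs.
Implicit Types (U V K : {set T}) (p : nat -> T).

Definition induced (U : {set T}) : rel T := fun a b => [&& e a b, a \in U & b \in U].

Lemma induced_sym U : symmetric (induced U).
Proof. by move=> a b; rewrite /induced esym (andbC (a \in U)). Qed.

Lemma connect_induced_in U a b : connect (induced U) a b -> a \in U -> b \in U.
Proof.
move/connectP=> [s]; elim: s a => [|c s IHs] a /=; first by move=> _ ->.
by case/andP=> /and3P[_ _ cU] cs bl _; apply: IHs cs bl cU.
Qed.

Definition reach (U : {set T}) (c : T) : {set T} := [set y | connect (induced U) c y].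

Lemma reach_subset U c : c \in U -> reach U c \subset U.
Proof. by move=> cU; apply/subsetP=> y; rewrite inE => /connect_induced_in; apply. Qed.

Lemma reach_closed U c x y : x \in reach U c -> x \in U -> y \in U -> e x y ->
  y \in reach U c.
Proof.
by rewrite !inE => cx xU yU exy; apply: connect_trans cx (connect1 _); rewrite /induced exy xU.
Qed.

Lemma reach_connected U c : induced_connected e (reach U c).
Proof.
have lift y : connect (induced U) c y -> connect (induced (reach U c)) c y.
  move/connectP=> [s]; elim/last_ind: s y => [|s z IHs] y /=; first by move=> _ ->.
  rewrite rcons_path last_rcons => /andP[cs lz] ->.
  have cl : connect (induced U) c (last c s) by apply/connectP; exists s.
  apply: connect_trans (IHs _ cs erefl) (connect1 _).
  move: (lz) => /and3P[elz _ _]; rewrite /induced elz !inE cl.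
  exact: connect_trans cl (connect1 lz).
split; first by apply/set0Pn; exists c; rewrite inE connect0.
move=> x y; rewrite !inE => cx cy.
apply: (connect_trans (y := c)); last exact: lift.
by rewrite (sym_connect_sym (induced_sym _)); apply: lift.
Qed.

Lemma induced_connected1 x : induced_connected e [set x].
Proof.
split; first by apply/set0Pn; exists x; rewrite inE.
by move=> a b; rewrite !inE => /eqP-> /eqP->; apply: connect0.
Qed.

Lemma K4_minor_of_triangle x y z (B : {set T}) :
  e x y -> e y z -> e z x -> induced_connected e B ->
  x \notin B -> y \notin B -> z \notin B ->
  (exists2 b, b \in B & e x b) -> (exists2 b, b \in B & e y b) ->
  (exists2 b, b \in B & e z b) -> has_K4_minor e.
Proof.
move=> exy eyz ezx cB xB yB zB [bx bxB xbx] [b_y byB yby] [bz bzB zbz].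
have neq a b : e a b || e b a -> a != b by apply: contraTneq => ->; rewrite eirr.
have adj1 a b : e a b -> exists u v, [/\ u \in [set a], v \in [set b] & e u v].
  by move=> eab; exists a, b; rewrite !inE.
have adjB a b : b \in B -> e a b -> exists u v, [/\ u \in [set a], v \in B & e u v].
  by move=> bB eab; exists a, b; rewrite !inE.
have Badj a b : b \in B -> e a b -> exists u v, [/\ u \in B, v \in [set a] & e u v].
  by move=> bB eab; exists b, a; rewrite !inE esym.
exists (fun i : 'I_4 => nth B [:: [set x]; [set y]; [set z]] i); split.
- by case=> [[|[|[|[|i]]]] lt_i] //=; apply: induced_connected1.
- case=> [[|[|[|[|i]]]] ?] // [[|[|[|[|j]]]] ?] //= _;
    rewrite ?disjoints1 ?(disjoint_sym B) ?disjoints1 ?inE //;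
    by apply: neq; rewrite ?exy ?eyz ?ezx ?orbT.
- case=> [[|[|[|[|i]]]] ?] // [[|[|[|[|j]]]] ?] //= _;
    by [apply: adj1; rewrite // esym | exact: adjB bxB xbx | exact: adjB byB yby
       | exact: adjB bzB zbz | exact: Badj bxB xbx | exact: Badj byB yby | exact: Badj bzB zbz].
Qed.

Lemma connect_induced_sub U V x y : U \subset V -> connect (induced U) x y ->
  connect (induced V) x y.
Proof.
move=> sUV; apply: connect_sub => a b /and3P[eab aU bU]; apply: connect1.
by rewrite /induced eab !(subsetP sUV).
Qed.

Lemma walk_induced_in U p n : walk (induced U) p n -> 0 < n -> forall i, i <= n -> p i \in U.
Proof.
move=> pw n_gt0 i le_in; have [lt_in | ->] : i < n \/ i = n by lia.
  by case/and3P: (pw i lt_in).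
have lt_n : n.-1 < n by lia.
by rewrite -(prednK n_gt0); case/and3P: (pw n.-1 lt_n).
Qed.

Lemma induced_path_induced U p n : induced_path (induced U) p n -> induced_path e p n.
Proof.
case: n => [|n] [pw pchord pinj]; first by split=> // i j; lia.
have pU := walk_induced_in pw isT.
split=> // [i lt_in | i j ij]; first by case/and3P: (pw i lt_in).
by apply: contra (pchord i j ij) => eij; rewrite /induced eij !pU //; lia.
Qed.

End InducedSubgraphs.

Section InducedCycles.
Implicit Types (h p : nat -> T) (o : rel T).

(* An induced cycle of length k, listed periodically: h i is its vertex number i mod k. *)
Definition induced_cycle_fun h k := [/\ 4 <= k,
  forall i j, (h i == h j) = (i == j %[mod k]) &
  forall i j, e (h i) (h j) = (i.+1 == j %[mod k]) || (j.+1 == i %[mod k])].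

Lemma induced_cycle_fun_nth x0 s : induced_cycle e s ->
  induced_cycle_fun (fun j => nth x0 s (j %% size s)) (size s).
Proof.
case=> us size_s adj; have s_gt0 : 0 < size s by lia.
split=> // [i j|i j]; first by rewrite nth_uniq ?ltn_pmod.
by rewrite adj ?ltn_pmod // !modnSml (eq_sym (j %% _)) (eq_sym (i %% _)).
Qed.

Section InducedCycle.
Variables (h : nat -> T) (k : nat).
Hypothesis hc : induced_cycle_fun h k.

Lemma induced_cycle_fun_shift a : induced_cycle_fun (fun j => h (a + j)) k.
Proof.
case: hc => k4 heq hadj; split=> // i j; first by rewrite heq eqn_modDl.
by rewrite hadj -!addnS !eqn_modDl.
Qed.

Lemma induced_cycle_fun_neq i d : 0 < d < k -> h (i + d) != h i.
Proof. by case: hc => _ heq _ lt_d; rewrite heq eq_sym eqn_mod_ltF //; lia. Qed.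

Lemma induced_cycle_fun_periodic j : h (j + k) = h j.
Proof. by case: hc => _ heq _; apply/eqP; rewrite heq modnDr. Qed.

Lemma induced_cycle_fun_mod j : h (j %% k) = h j.
Proof. by case: hc => _ heq _; apply/eqP; rewrite heq modn_mod. Qed.

Lemma induced_cycle_fun_edge j : e (h j) (h j.+1).
Proof. by case: hc => _ _ hadj; rewrite hadj eqxx. Qed.

Lemma induced_cycle_fun_gap2 j : ~~ e (h j) (h j.+2) && (h j != h j.+2).
Proof.
case: hc => k4 heq hadj; rewrite hadj heq [j.+3 == _ %[mod k]]eq_sym.
by rewrite !eqn_mod_ltF //; lia.
Qed.

End InducedCycle.

Lemma K4_minor_of_cycle_nbr h k w j : induced_cycle_fun h k -> (forall i, w != h i) ->
  e w (h j) -> e w (h j.+1) -> e w (h j.+2) -> has_K4_minor e.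
Proof.
move=> hc0 w_off wj wj1 wj2.
suff K4 g : induced_cycle_fun g k -> (forall i, w != g i) ->
    e w (g 0) -> e w (g 1) -> e w (g 2) -> has_K4_minor e.
  apply: (K4 (fun i => h (j + i))); rewrite ?addn0 ?addn1 ?addn2 //.
  exact: induced_cycle_fun_shift.
move=> {h hc0 w_off wj wj1 wj2 j}; rename g into h; move=> hc w_off w0 w1 w2.
have k4 : 4 <= k by case: hc.
pose B := [set x | [exists i : 'I_(k - 2), x == h i.+2]].
have inB i : i < k - 2 -> h i.+2 \in B.
  by move=> lt_i; rewrite inE; apply/existsP; exists (Ordinal lt_i).
have from2 i : i < k - 2 -> connect (induced B) (h 2) (h i.+2).
  move=> lt_i; apply: (walk_connect (p := fun l => h l.+2)) => l lt_l.
  by rewrite /induced (induced_cycle_fun_edge hc) !inB //; lia.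
have cB : induced_connected e B.
  split; first by apply/set0Pn; exists (h 2); apply: inB; lia.
  move=> x y; rewrite !inE => /existsP[i /eqP->] /existsP[i' /eqP->].
  apply: (connect_trans (y := h 2)); last exact: from2.
  by rewrite (sym_connect_sym (induced_sym B)) from2.
have offB a : a < 2 -> h a \notin B.
  move=> lt_a2; rewrite inE; apply/existsPn=> i; have lt_i := ltn_ord i.
  by rewrite eq_sym (_ : i.+2 = a + (i.+2 - a)) ?(induced_cycle_fun_neq hc) //; lia.
apply: (K4_minor_of_triangle (x := w) (y := h 0) (z := h 1) (B := B)) => //.
- exact: (induced_cycle_fun_edge hc).
- by rewrite esym.
- by rewrite inE; apply/existsPn=> i; rewrite w_off.
- exact: offB.
- exact: offB.
- by exists (h 2) => //; apply: inB; lia.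
- exists (h (k - 3).+2); first by apply: inB; lia.
  rewrite esym (_ : (k - 3).+2 = k.-1); last by lia.
  have hk0 : h k = h 0 by rewrite -[k]add0n (induced_cycle_fun_periodic hc).
  by have := induced_cycle_fun_edge hc k.-1; rewrite prednK ?hk0 //; lia.
- by exists (h 2); [apply: inB; lia | apply: (induced_cycle_fun_edge hc)].
Qed.

Lemma one_perfect_walk_backward o p m : one_perfect e o -> walk e p m ->
  (forall j, j.+2 <= m -> ~~ e (p j) (p j.+2) && (p j != p j.+2)) ->
  o (p 1) (p 0) -> forall j, j < m -> o (p j.+1) (p j).
Proof.
move=> [[eo _] clique] pw pgap o10; elim=> [//|j IHj] lt_jm.
have o_back := IHj (ltnW lt_jm); have /andP[/negP nadj neq] := pgap j lt_jm.
by move: (pw _ lt_jm); rewrite eo => /orP[o_fwd|//]; case: nadj; apply: clique o_back o_fwd neq.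
Qed.

Lemma one_perfect_cycle_cyclic o h k : one_perfect e o -> induced_cycle_fun h k ->
  (forall j, o (h j) (h j.+1)) \/ (forall j, o (h j.+1) (h j)).
Proof.
move=> op hc; have [[eo _] _] := op; have k4 : 4 <= k by case: hc.
have reduce (r : rel T) : (forall j, j < k -> r (h j) (h j.+1)) -> forall j, r (h j) (h j.+1).
  move=> rk j; have hS : h j.+1 = h (j %% k).+1.
    by apply/eqP; case: hc => _ heq _; rewrite heq modnSml.
  by rewrite hS -(induced_cycle_fun_mod hc j); apply: rk; rewrite ltn_pmod //; lia.
case: (boolP [exists j : 'I_k, o (h j.+1) (h j)]) => [/existsP[j0 back0] | /existsPn fwd].
  right; apply: (reduce (fun a b => o b a)) => j lt_jk; have lt_j0 := ltn_ord j0.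
  have hc0 := induced_cycle_fun_shift hc j0.
  have back : forall i, i < k -> o (h (j0 + i.+1)) (h (j0 + i)).
    apply: (one_perfect_walk_backward (p := fun i => h (j0 + i)) op).
    - by move=> i _; apply: induced_cycle_fun_edge hc0 i.
    - by move=> i _; apply: induced_cycle_fun_gap2 hc0 i.
    - by rewrite addn0 addn1.
  have [le_j0j | lt_jj0] := leqP j0 j.
    by have := back (j - j0); rewrite addnS subnKC //; apply; lia.
  have := back (j + k - j0); rewrite addnS subnKC; last by lia.
  by rewrite -addSn !(induced_cycle_fun_periodic hc); apply; lia.
left; apply: (reduce o) => j lt_jk; have /negP back := fwd (Ordinal lt_jk).
by move: (induced_cycle_fun_edge hc j); rewrite eo => /orP[// | /back].
Qed.

Lemma one_perfect_cycle_out o h k j : one_perfect e o -> induced_cycle_fun h k ->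
  exists i, o (h j) (h i).
Proof.
move=> op hc; case: (one_perfect_cycle_cyclic op hc) => [fwd | back]; first by exists j.+1.
exists (j + k).-1; have := back (j + k).-1.
by rewrite prednK ?(induced_cycle_fun_periodic hc) //; case: hc; lia.
Qed.

Lemma one_perfect_out_nbr o x y z w : one_perfect e o ->
  o x y -> o y z -> o x w -> w != y -> w != z -> o w y \/ e w y && e w z.
Proof.
move=> [[eo _] clique] oxy oyz oxw wy wz.
have ewy : e w y by apply: clique oxw oxy wy.
have [owy | oyw] : o w y \/ o y w by apply/orP; rewrite -eo.
  by left.
by right; rewrite ewy (clique y w z oyw oyz wz).
Qed.

Section SinkOffCycle.
Variables (o : rel T) (h : nat -> T) (k : nat).
Hypotheses (noK4 : ~ has_K4_minor e) (op : one_perfect e o) (hc : induced_cycle_fun h k).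

Lemma one_perfect_cycle_escape w j : (forall i, w != h i) -> o (h j) w ->
  exists i, o w (h i).
Proof.
move=> w_off ojw; have [[eo _] _] := op; have k4 : 4 <= k by case: hc.
have ewj : e w (h j) by rewrite eo ojw orbT.
case: (one_perfect_cycle_cyclic op hc) => [fwd | back].
  case: (one_perfect_out_nbr op (fwd j) (fwd j.+1) ojw (w_off _) (w_off _)) => [|/andP[w1 w2]].
    by exists j.+1.
  by case: noK4; apply: (K4_minor_of_cycle_nbr hc w_off ewj w1 w2).
pose i := j + k - 2; have hj : h j = h i.+2.
  by rewrite (_ : i.+2 = j + k) ?(induced_cycle_fun_periodic hc) //; lia.
rewrite hj in ojw ewj.
case: (one_perfect_out_nbr op (back i.+1) (back i) ojw (w_off _) (w_off _)) => [|/andP[w1 w0]].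
  by exists i.+1.
by case: noK4; apply: (K4_minor_of_cycle_nbr hc w_off w0 w1 ewj).
Qed.

Lemma sink_off_cycle v : sink o v -> forall i, v != h i.
Proof.
move=> vsink i; apply/eqP=> vi; have [i' oi] := one_perfect_cycle_out i op hc.
by move: (vsink (h i')); rewrite vi oi.
Qed.

Lemma no_walk_from_sink (B : {pred T}) v m p :
  (forall x, x \in B -> exists i, x = h i) -> (forall i, h i \in B) ->
  sink o v -> p 0 = v -> p m \in B -> walk e p m -> False.
Proof.
move=> Bh hB vsink; have [[eo _] clique] := op.
elim/ltn_ind: m p => m IHm p p0 pB pw.
have [q [n [q0 qB le_nm [qw qchord qinj] qoff]]] := induced_path_to pw pB; rewrite p0 in q0.
have [c qc] := Bh _ qB.
have n_gt0 : 0 < n.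
  case: n {qw qchord qinj qoff le_nm} qB qc => // _ qc.
  by move: (sink_off_cycle vsink c); rewrite -q0 qc eqxx.
have back : forall j, j < n -> o (q j.+1) (q j).
  apply: (one_perfect_walk_backward op qw).
    by move=> j le_jn; rewrite qchord ?qinj //; lia.
  by have := qw 0 n_gt0; rewrite eo q0 (negbTE (vsink _)).
have w_off i : q n.-1 != h i.
  have lt_n : n.-1 < n by lia.
  by apply: contraNneq (qoff _ lt_n) => ->.
have ocw : o (h c) (q n.-1) by rewrite -qc -{1}(prednK n_gt0); apply: back; lia.
have [y oy] := one_perfect_cycle_escape w_off ocw.
have [n1 | n_ge2] : n = 1 \/ 1 < n by lia.
  by rewrite n1 in oy; move: (vsink (h y)); rewrite -q0 oy.
have [n' def_n] : exists n', n = n'.+2 by exists n.-2; lia.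
subst n; rewrite /= in oy.
apply: (IHm n'.+1 _ (fun l => if l <= n' then q l else h y)) => /=.
- by lia.
- exact: q0.
- by rewrite ltnn.
apply: (@walk_extend _ e q n' (h y)); first by move=> i lt_i; apply: qw; lia.
apply: (clique (q n'.+1)); rewrite ?back //.
by apply: contraNneq (qoff n' (leqW (ltnSn n'))) => ->.
Qed.

End SinkOffCycle.

Lemma chordal_of_one_perfect_sink o v : connected_graph e -> ~ has_K4_minor e ->
  one_perfect e o -> sink o v -> chordal e.
Proof.
move=> [_ conn] noK4 op vsink s cyc.
have hc := induced_cycle_fun_nth v cyc; have s_gt0 : 0 < size s by case: cyc; lia.
have [c cs] : exists c, c \in s by exists (nth v s 0); rewrite mem_nth.
have [p [m [p0 pm pw]]] := connect_walk (conn v c (in_setT v) (in_setT c)).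
apply: (no_walk_from_sink noK4 op hc (B := mem s) (m := m) _ _ vsink p0).
- move=> x xs; exists (index x s).
  by rewrite modn_small ?index_mem ?nth_index.
- by move=> i; rewrite mem_nth ?ltn_pmod.
- by rewrite pm.
- by move=> i /pw /and3P[].
Qed.

End InducedCycles.

Section TwoTreeOrientation.
Implicit Types (V N A : {set T}) (o : rel T).

Definition one_perfect_on V o := [/\ forall x y, o x y -> (x \in V) && (y \in V),
  forall x y, x \in V -> y \in V -> e x y = o x y || o y x,
  forall x y, ~~ (o x y && o y x) &
  forall p x y, o p x -> o p y -> x != y -> e x y].

Lemma one_perfect_on1 a : one_perfect_on [set a] (fun _ _ => false).
Proof. by split=> // x y; rewrite !inE => /eqP-> /eqP->; rewrite eirr. Qed.

Lemma one_perfect_on_notin V o x y : one_perfect_on V o -> x \notin V -> o x y = false.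
Proof. by case=> o_in _ _ _; apply: contraNF => /o_in/andP[]. Qed.

Definition orient_attach o z N A : rel T :=
  fun p q => [|| o p q, (q == z) && (p \in A) | (p == z) && (q \in N) && (q \notin A)].

Lemma orient_attach_neq o z N A p q :
  p != z -> orient_attach o z N A p q = o p q || (q == z) && (p \in A).
Proof. by rewrite /orient_attach => /negbTE->; rewrite orbF. Qed.

Lemma orient_attach_z o z N A q :
  o z q = false -> z \notin A -> orient_attach o z N A z q = (q \in N) && (q \notin A).
Proof. by rewrite /orient_attach eqxx => -> /negbTE->; rewrite andbF. Qed.

Section Attach.
Variables (V N A : {set T}) (o : rel T) (z : T).
Hypotheses (op : one_perfect_on V o) (zV : z \notin V) (NV : N \subset V) (AN : A \subset N).
Hypothesis N_clique : {in N &, forall x y, x != y -> e x y}.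
Hypothesis z_nbrs : forall w, w \in V -> e z w = (w \in N).
Hypothesis A_outs : forall a q, a \in A -> o a q -> q \in N.

Let in_V x : x \in N -> x \in V.
Proof. exact: subsetP NV x. Qed.

Lemma one_perfect_on_attach : one_perfect_on (z |: V) (orient_attach o z N A).
Proof.
have [o_in eo anti clique] := op.
have neq_z x : x \in V -> x != z by apply: contraTneq => ->.
have ozq q : o z q = false := one_perfect_on_notin q op zV.
have oqz q : o q z = false by apply: contraNF zV => /o_in/andP[].
have zA : z \notin A by apply: contra zV => /(subsetP AN)/in_V.
have oz q : orient_attach o z N A z q = (q \in N :\: A) by rewrite orient_attach_z // inE andbC.
have zN : z \notin N := contra (@in_V z) zV.
have NA y : (y \in N :\: A) || (y \in A) = (y \in N).
  by rewrite in_setD; case: (boolP (y \in A)) => [/(subsetP AN)-> | _]; rewrite ?orbT ?orbF.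
split.
- move=> p q; case: (eqVneq p z) => [-> | pz]; rewrite ?oz ?orient_attach_neq //.
    by rewrite !inE eqxx => /andP[_ /in_V->]; rewrite orbT.
  case/orP=> [/o_in/andP[pV qV] | /andP[/eqP-> /(subsetP AN)/in_V pV]];
    by rewrite !inE ?pV ?qV ?eqxx ?orbT.
- move=> x y; rewrite !inE => /predU1P[-> | xV] /predU1P[-> | yV].
  + by rewrite eirr oz in_setD (negbTE zN) andbF.
  + rewrite oz orient_attach_neq ?neq_z // z_nbrs // oqz eqxx /=.
    by rewrite NA.
  + rewrite oz orient_attach_neq ?neq_z // esym z_nbrs // oqz eqxx /=.
    by rewrite orbC NA.
  + by rewrite !orient_attach_neq ?neq_z // eo // !(negbTE (neq_z _ _)) // !orbF.
- move=> x y; apply/negP=> /andP[].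
  case: (eqVneq x z) => [-> | xz]; case: (eqVneq y z) => [-> | yz];
    rewrite ?oz ?orient_attach_neq // ?eqxx ?ozq ?oqz //=.
  + by rewrite in_setD (negbTE zN) andbF.
  + by rewrite in_setD => /andP[/negbTE->].
  + by rewrite in_setD => xA /andP[/negP].
  + rewrite (negbTE xz) (negbTE yz) !orbF => oxy oyx.
    by case/negP: (anti x y); rewrite oxy.
- move=> p x y; case: (eqVneq p z) => [-> | pz].
    by rewrite !oz !in_setD => /andP[_ xN] /andP[_ yN]; apply: N_clique.
  rewrite !orient_attach_neq // => /orP[pox | /andP[/eqP-> pA]] /orP[poy | /andP[/eqP-> pA']].
  + exact: clique pox poy.
  + move=> _; have /andP[_ xV] := o_in _ _ pox.
    by rewrite esym z_nbrs // (A_outs pA' pox).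
  + move=> _; have /andP[_ yV] := o_in _ _ poy.
    by rewrite z_nbrs // (A_outs pA poy).
  + by rewrite eqxx.
Qed.

End Attach.

Definition edge_rooted V o a b :=
  [/\ one_perfect_on V o, forall q, o a q = false & forall q, o b q = (q == a)].

Lemma edge_rooted_pair a b : e a b ->
  edge_rooted (b |: [set a]) (orient_attach (fun _ _ => false) b [set a] set0) a b.
Proof.
move=> eab; have ba : b != a by apply: contraTneq eab => ->; rewrite eirr.
split; last 2 first.
- by move=> q; rewrite orient_attach_neq 1?eq_sym // in_set0 andbF.
- by move=> q; rewrite orient_attach_z ?inE /= ?andbT.
apply: one_perfect_on_attach; rewrite ?sub0set ?inE //.
- exact: one_perfect_on1.
- by move=> p q; rewrite !inE => /eqP-> /eqP->; rewrite eqxx.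
- by move=> w; rewrite !inE => /eqP->; rewrite esym eab eqxx.
Qed.

Section AttachToTwoTree.
Variables (W : {set T}) (x y z : T).
Hypotheses (xW : x \in W) (yW : y \in W) (exy : e x y) (zW : z \notin W).
Hypothesis z_nbrs : forall w, w \in W -> e z w = (w == x) || (w == y).

Let NW : [set x; y] \subset W.
Proof. by rewrite subUset !sub1set xW yW. Qed.

Let zN : z \notin [set x; y].
Proof. by apply: contra zW => /(subsetP NW). Qed.

Let neq_z p : p \in W -> p != z.
Proof. by apply: contraTneq => ->. Qed.

Let attach o A : one_perfect_on W o -> A \subset [set x; y] ->
  (forall a q, a \in A -> o a q -> q \in [set x; y]) ->
  one_perfect_on (z |: W) (orient_attach o z [set x; y] A).
Proof.
move=> op AN A_outs; apply: (one_perfect_on_attach op zW NW AN _ _ A_outs) => [p q | w wW].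
  by rewrite !inE => /orP[]/eqP-> /orP[]/eqP->; rewrite ?eqxx // esym.
by rewrite z_nbrs // !inE.
Qed.

Lemma two_tree_attach_other p : p \in [set x; y] -> exists2 c, [set x; y] = [set p; c] & e p c.
Proof.
rewrite !inE => /orP[]/eqP->; first by exists y.
by exists x; rewrite 1?setUC // esym.
Qed.

Lemma edge_rooted_attach_old o a b : a \in W -> b \in W -> edge_rooted W o a b ->
  exists o', edge_rooted (z |: W) o' a b.
Proof.
move=> aW bW [op a_sink b_out]; exists (orient_attach o z [set x; y] set0); split.
- by apply: attach; rewrite ?sub0set // => p q; rewrite inE.
- by move=> q; rewrite orient_attach_neq ?neq_z // a_sink inE andbF.
- by move=> q; rewrite orient_attach_neq ?neq_z // b_out inE andbF orbF.
Qed.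

Lemma edge_rooted_attach_sink o b c : [set x; y] = [set b; c] -> edge_rooted W o b c ->
  exists o', edge_rooted (z |: W) o' z b.
Proof.
move=> def_N [op b_sink c_out]; have bW : b \in W by rewrite (subsetP NW) // def_N !inE eqxx.
exists (orient_attach o z [set x; y] [set x; y]); split.
- apply: attach => // p q; rewrite def_N !inE => /orP[]/eqP->; first by rewrite b_sink.
  by rewrite c_out => /eqP->; rewrite eqxx.
- by move=> q; rewrite orient_attach_z ?(one_perfect_on_notin q op) // andbN.
- by move=> q; rewrite orient_attach_neq ?neq_z // b_sink def_N !inE eqxx andbT.
Qed.

Lemma edge_rooted_attach_source o a c : [set x; y] = [set a; c] -> e a c ->
  edge_rooted W o a c -> exists o', edge_rooted (z |: W) o' a z.
Proof.
move=> def_N eac [op a_sink c_out]; have ac : a != c by apply: contraTneq eac => ->; rewrite eirr.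
have aW : a \in W by rewrite (subsetP NW) // def_N !inE eqxx.
exists (orient_attach o z [set x; y] [set c]); split.
- apply: attach; rewrite ?sub1set ?def_N ?inE ?eqxx ?orbT // => p q; rewrite inE => /eqP->.
  by rewrite c_out => /eqP->; rewrite !inE eqxx.
- by move=> q; rewrite orient_attach_neq ?neq_z // a_sink inE (negbTE ac) andbF.
- move=> q; rewrite orient_attach_z ?(one_perfect_on_notin q op) //; last first.
    by apply: contra zN; rewrite def_N !inE => /eqP->; rewrite eqxx orbT.
  rewrite def_N !inE; case: (eqVneq q c) => [-> | qc]; last by rewrite orbF andbT.
  by rewrite orbT andbF eq_sym (negbTE ac).
Qed.

End AttachToTwoTree.

Lemma two_tree_edge_rooted V : two_tree_on e V -> forall a b, a \in V -> b \in V -> e a b ->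
  exists o, edge_rooted V o a b.
Proof.
elim=> [x y xy exy | W x y z tW IHW xW yW exy zW z_nbrs] a b.
  move=> aV bV eab; have ab : a != b by apply: contraTneq eab => ->; rewrite eirr.
  have -> : [set x; y] = b |: [set a].
    apply/eqP; rewrite eq_sym eqEcard cards2 xy cardsU1 cards1 in_set1 eq_sym ab andbT.
    by rewrite subUset !sub1set aV bV.
  by eexists; apply: edge_rooted_pair.
have NW : [set x; y] \subset W by rewrite subUset !sub1set xW yW.
rewrite !inE => /predU1P[-> | aW] /predU1P[-> | bW] eab.
- by rewrite eirr in eab.
- have [c def_N ebc] : exists2 c, [set x; y] = [set b; c] & e b c.
    by apply: two_tree_attach_other; rewrite // !inE -z_nbrs.
  have cW : c \in W by rewrite (subsetP NW) // def_N !inE eqxx orbT.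
  have [o ro] := IHW b c bW cW ebc.
  exact: (edge_rooted_attach_sink xW yW exy zW z_nbrs def_N ro).
- have [c def_N eac] : exists2 c, [set x; y] = [set a; c] & e a c.
    by apply: two_tree_attach_other; rewrite // !inE -z_nbrs // esym.
  have cW : c \in W by rewrite (subsetP NW) // def_N !inE eqxx orbT.
  have [o ro] := IHW a c aW cW eac.
  exact: (edge_rooted_attach_source xW yW exy zW z_nbrs def_N eac ro).
- have [o ro] := IHW a b aW bW eab.
  exact: (edge_rooted_attach_old xW yW exy zW z_nbrs aW bW ro).
Qed.

Lemma two_tree_on_nbr V : two_tree_on e V -> forall a, a \in V -> exists2 b, b \in V & e a b.
Proof.
elim=> [x y _ exy | W x y z _ IHW xW _ _ _ z_nbrs] a.
  by rewrite !inE => /orP[]/eqP->; [exists y | exists x]; rewrite ?inE ?eqxx ?orbT // esym.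
rewrite in_setU1 => /predU1P[-> | aW]; first by exists x; rewrite ?inE ?xW ?orbT // z_nbrs ?eqxx.
by have [b bW eab] := IHW a aW; exists b; rewrite // inE bW orbT.
Qed.

Lemma one_perfect_sink_of_two_tree : two_tree e -> forall v, exists o, one_perfect e o /\ sink o v.
Proof.
move=> tt v; have [b _ evb] := two_tree_on_nbr tt (in_setT v).
have [o [[_ eo anti clique] v_sink _]] := two_tree_edge_rooted tt (in_setT v) (in_setT b) evb.
exists o; split; last by move=> y; rewrite v_sink.
by do !split=> //; move=> x y; apply: eo; rewrite in_setT.
Qed.

Lemma one_perfect_sink_of_K1 : is_K1 T -> forall v, exists o, one_perfect e o /\ sink o v.
Proof.
move=> K1 v; have /fintype_le1P all_eq : #|T| <= 1 by rewrite K1.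
exists (fun _ _ => false); split=> //; split=> //; split=> // x y.
by rewrite (all_eq x y) eirr.
Qed.

End TwoTreeOrientation.

Section ChordalTwoTree.
Implicit Types (U V K : {set T}) (p : nat -> T).

Lemma induced_cycle_mkseq f n : 4 <= n ->
  (forall i j, i < j < n -> f i != f j) ->
  (forall i j, i < j < n -> e (f i) (f j) = (j == i.+1) || (i == 0) && (j == n.-1)) ->
  induced_cycle e (mkseq f n).
Proof.
move=> n4 f_inj f_adj; split; [|by rewrite size_mkseq|].
  rewrite map_inj_in_uniq ?iota_uniq // => i j.
  rewrite !mem_iota => /andP[_ lt_i] /andP[_ lt_j] fij.
  apply/eqP; case: (ltngtP i j) => // ij.
  - by move: (f_inj i j); rewrite fij eqxx ij lt_j => /(_ isT).
  - by move: (f_inj j i); rewrite fij eqxx ij lt_i => /(_ isT).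
move=> i j; rewrite size_mkseq => lt_i lt_j x0; rewrite !nth_mkseq //.
have modS a : a < n -> a.+1 %% n = if a.+1 == n then 0 else a.+1.
  by move=> lt_a; case: eqP => [->|?]; rewrite ?modnn // modn_small //; lia.
rewrite !modS //; case: (ltngtP i j) => [ij | ji | ->].
- by rewrite f_adj ?ij //; repeat case: ifP => ?; lia.
- by rewrite esym f_adj ?ji //; repeat case: ifP => ?; lia.
- by rewrite eirr; repeat case: ifP => ?; lia.
Qed.

Lemma induced_cycle_close q n t : 1 < n -> induced_path e q n ->
  (forall i, i <= n -> q i != t) -> (forall i, i <= n -> e (q i) t = (i == 0) || (i == n)) ->
  induced_cycle e (mkseq (fun i => if i <= n then q i else t) n.+2).
Proof.
move=> n_gt1 [qw qchord qinj] qt_neq qt.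
apply: induced_cycle_mkseq => [|i j /andP[lt_ij lt_jn]|i j /andP[lt_ij lt_jn]]; first by lia.
- have le_in : i <= n by lia.
  have [le_jn | ->] : j <= n \/ j = n.+1 by lia.
    by rewrite le_jn le_in qinj ?lt_ij.
  by rewrite le_in ltnn qt_neq.
- have le_in : i <= n by lia.
  have [le_jn | ->] : j <= n \/ j = n.+1 by lia.
    rewrite le_jn le_in (_ : (j == n.+1) = false) ?andbF ?orbF; last by lia.
    case: (eqVneq j i.+1) => [-> | ?]; first by apply: qw; lia.
    by apply/negbTE/qchord; lia.
  by rewrite le_in ltnn qt //= eqSS eqxx andbT orbC eq_sym.
Qed.

Definition biconnected_on V := [/\ V != set0,
  forall x y, x \in V -> y \in V -> connect (induced V) x y &
  forall w x y, x \in V -> y \in V -> x != w -> y != w -> connect (induced (V :\ w)) x y].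

Definition sep_component V s t K := [/\
  forall x, x \in K -> [&& x \in V, x != s & x != t],
  induced_connected e K &
  forall x y, x \in K -> y \in V -> e x y -> [|| y \in K, y == s | y == t]].

Lemma sep_component_sym V s t K : sep_component V s t K -> sep_component V t s K.
Proof.
case=> K_in Kc K_nbrs; split=> // [x /K_in/and3P[-> -> ->] // | x y xK yV exy].
by rewrite [X in _ || X]orbC; apply: K_nbrs xK yV exy.
Qed.

Lemma sep_component_nbr V s t K : biconnected_on V -> s \in V -> t \in V -> s != t ->
  sep_component V s t K -> exists2 a, a \in K & e a t.
Proof.
move=> [_ _ Vcut] sV tV st [K_in [/set0Pn[a aK] _] K_nbrs].
have /and3P[aV a_s _] := K_in a aK.
have tK : t \notin K by apply/negP=> /K_in/and3P[_ _]; rewrite eqxx.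
have ts : t != s by rewrite eq_sym.
have [x [y [xK yK /and3P[exy _]]]] := connect_exit (Vcut s a t aV tV a_s ts) aK tK.
rewrite in_setD1 => /andP[ys yV].
have := K_nbrs x y xK yV exy; rewrite (negbTE yK) (negbTE ys) /= => /eqP yt.
by exists x; rewrite -?yt.
Qed.

Lemma sep_component_common_nbr V s t K : chordal e -> e s t -> sep_component V s t K ->
  (exists2 a, a \in K & e s a) -> (exists2 b, b \in K & e b t) ->
  exists2 u, u \in K & e s u && e u t.
Proof.
move=> ch est [K_in [_ Kc] _] [a aK esa] [b bK ebt].
have sK : s \notin K by apply/negP=> /K_in/and3P[_]; rewrite eqxx.
have tK : t \notin K by apply/negP=> /K_in/and3P[_ _]; rewrite eqxx.
have st : s != t by apply: contraTneq est => ->; rewrite eirr.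
have sb : connect (induced (s |: K)) s b.
  apply: (connect_trans (y := a)); last exact: connect_induced_sub (subsetUr _ _) (Kc a b aK bK).
  by apply: connect1; rewrite /induced esa !inE eqxx aK orbT.
have [p [m [p0 pm pw]]] := connect_walk sb.
have pB : p m \in [pred x | (x \in K) && e x t] by rewrite inE pm bK.
have [q [n [q0 qB _ qpath qoff]]] := induced_path_to pw pB; rewrite p0 in q0.
move: qB; rewrite inE => /andP[qnK qnt].
have n_gt0 : 0 < n by apply: contraTT qnK; rewrite lt0n negbK => /eqP->; rewrite q0.
have [qw _ qinj] := induced_path_induced qpath.
have qU : forall i, i <= n -> q i \in s |: K.
  by case: qpath => qwU _ _; apply: walk_induced_in qwU n_gt0.
have qK i : 0 < i <= n -> q i \in K.
  move=> /andP[i_gt0 le_in]; have := qU i le_in.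
  have := qinj 0 i; rewrite i_gt0 le_in q0 => /(_ isT) si.
  by rewrite in_setU1 eq_sym (negbTE si).
have [n_le1 | n_gt1] := leqP n 1.
  have n1 : n = 1 by apply/eqP; rewrite eqn_leq n_le1.
  by subst n; exists (q 1); rewrite ?qK // -q0 qw.
exfalso; apply: (ch _ (induced_cycle_close (t := t) n_gt1 (induced_path_induced qpath) _ _)).
- move=> i le_in; case: (posnP i) => [-> | i_gt0]; first by rewrite q0.
  by apply: contraNneq tK => <-; apply: qK; rewrite i_gt0.
- move=> i le_in; case: (posnP i) => [-> | i_gt0]; first by rewrite q0 est.
  case: (eqVneq i n) => [-> | ni]; first by rewrite qnt orbT.
  have lt_in : i < n by rewrite ltn_neqAle ni.
  by apply/negbTE; have := qoff i lt_in; rewrite inE qK ?i_gt0.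
Qed.

Lemma sep_component_reach V s t K u k : sep_component V s t K -> k \in K :\ u ->
  {in reach (K :\ u) k, forall x, ~~ e x s} -> sep_component V t u (reach (K :\ u) k).
Proof.
move=> [K_in _ K_nbrs] kKu no_s; have sub := subsetP (reach_subset kKu).
split=> [x /sub | | x y xK' yV exy]; first by rewrite in_setD1 => /andP[-> /K_in/and3P[-> _ ->]].
  exact: reach_connected.
have xKu := sub x xK'; move: (xKu); rewrite in_setD1 => /andP[_ xK].
case/or3P: (K_nbrs x y xK yV exy) => [yK | /eqP ys | ->]; rewrite ?orbT //.
  case: (eqVneq y u) => [-> | yu]; first by rewrite !orbT.
  by rewrite (reach_closed xK' xKu) ?in_setD1 ?yu.
by move: (no_s x xK'); rewrite -ys exy.
Qed.

Lemma sep_component_shrink V s t K u k : ~ has_K4_minor e -> e s t -> sep_component V s t K ->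
  u \in K -> e s u -> e u t -> k \in K -> k != u ->
  exists2 K' : {set T}, K' \proper K & sep_component V s u K' \/ sep_component V t u K'.
Proof.
move=> noK4 est cK uK esu eut kK ku; have [K_in [_ Kc] _] := cK.
have kKu : k \in K :\ u by rewrite in_setD1 ku kK.
set K' := reach (K :\ u) k; have sub := subsetP (reach_subset kKu).
exists K'; first exact: sub_proper_trans (reach_subset kKu) (properD1 uK).
case: (boolP [exists x in K', e x s]) => [/exists_inP[a aK' eas] | /exists_inP no_s]; last first.
  right; apply: sep_component_reach cK kKu _ => x xK'.
  by apply/negP=> exs; apply: no_s; exists x.
case: (boolP [exists x in K', e x t]) => [/exists_inP[b bK' ebt] | /exists_inP no_t]; last first.
  left; apply: sep_component_reach (sep_component_sym cK) kKu _ => x xK'.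
  by apply/negP=> ext; apply: no_t; exists x.
have notK' c : c \notin K :\ u -> c \notin K' by apply: contra => /sub.
have [sK' tK' uK'] : [/\ s \notin K', t \notin K' & u \notin K'].
  by split; apply: notK'; rewrite in_setD1 ?eqxx //;
    apply/negP=> /andP[_ /K_in/and3P[_]]; rewrite eqxx ?andbF.
have kK' : k \in K' by rewrite inE connect0.
have [x [y [xK' yK' /and3P[exy _ yK]]]] := connect_exit (Kc k u kK uK) kK' uK'.
have yu : y = u.
  apply/eqP; apply: contraNT yK' => yu.
  by apply: (reach_closed xK' (sub x xK')); rewrite // in_setD1 yu.
have etu : e t u by rewrite esym.
have eus : e u s by rewrite esym.
case: noK4; apply: (K4_minor_of_triangle est etu eus (reach_connected (K :\ u) k)) => //.
- by exists a; rewrite // esym.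
- by exists b; rewrite // esym.
- by exists x; rewrite // esym -yu.
Qed.

Lemma sep_component_simplicial V s t K : biconnected_on V -> chordal e -> ~ has_K4_minor e ->
  s \in V -> t \in V -> e s t -> sep_component V s t K ->
  exists z x y, [/\ z \in K, x \in V, y \in V, e x y &
                    forall w, w \in V -> e z w = (w == x) || (w == y)].
Proof.
move=> bV ch noK4; move: {2}#|K| (erefl #|K|) => n.
elim/ltn_ind: n s t K => n IHn s t K Kn sV tV est cK.
have st : s != t by apply: contraTneq est => ->; rewrite eirr.
have [a aK eat] := sep_component_nbr bV sV tV st cK.
have ts : t != s by rewrite eq_sym.
have [b bK ebs] := sep_component_nbr bV tV sV ts (sep_component_sym cK).
have [u uK /andP[esu eut]] : exists2 u, u \in K & e s u && e u t.
  by apply: (sep_component_common_nbr ch est cK); [exists b; rewrite // esym | exists a].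
have [K_in _ K_nbrs] := cK; have /and3P[uV _ _] := K_in u uK.
case: (boolP [forall k in K, k == u]) => [/forall_inP Ku | /forall_inPn[k kK ku]].
  have eus : e u s by rewrite esym.
  exists u, s, t; split=> // w wV; apply/idP/idP => [euw | /orP[]/eqP-> //].
  case/or3P: (K_nbrs u w uK wV euw) => [wK | -> | ->]; rewrite ?orbT //.
  by move: euw; rewrite (eqP (Ku w wK)) eirr.
have [K' ltK' cK'] := sep_component_shrink noK4 est cK uK esu eut kK ku.
have K'n : #|K'| < n by rewrite -Kn proper_card.
have [z [x [y [zK' xV yV exy z_nbrs]]]] : exists z x y,
    [/\ z \in K', x \in V, y \in V, e x y & forall w, w \in V -> e z w = (w == x) || (w == y)].
  have etu : e t u by rewrite esym.
  case: cK' => cK'; first exact: (IHn _ K'n s u K' erefl sV uV esu cK').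
  exact: (IHn _ K'n t u K' erefl tV uV etu cK').
by exists z, x, y; split=> //; apply: (subsetP (proper_sub ltK')).
Qed.

Lemma connect_avoid U z a b : connect (induced U) a b -> a != z -> b != z ->
  (forall x y, induced U x z -> induced U z y -> x = y \/ e x y) ->
  connect (induced (U :\ z)) a b.
Proof.
move=> /connect_walk[p [m [p0 pm pw]]] az bz z_nbrs.
have pb : p m \in pred1 b by rewrite inE pm.
have [q [n [q0 /eqP qn _ [qw qchord qinj] _]]] := induced_path_to pw pb; rewrite p0 in q0.
have qz i : i <= n -> q i != z.
  move=> le_in; apply/eqP=> qiz.
  have [i0 | i_gt0] := posnP i; first by move: az; rewrite -q0 -qiz i0 eqxx.
  have [lt_in | i_n] : i < n \/ i = n by lia.
    have lt_pn : i.-1 < n by lia.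
    move: (qw _ lt_pn) (qw _ lt_in); rewrite prednK // qiz => pz zq.
    have [/eqP | epq] := z_nbrs _ _ pz zq; first by apply/negP; apply: qinj; lia.
    have gap : i.-1.+1 < i.+1 <= n by lia.
    have /and3P[_ pU _] := pz; have /and3P[_ _ qU] := zq.
    by move: (qchord _ _ gap); rewrite /induced epq pU qU.
  by move: bz; rewrite -qn -qiz i_n eqxx.
rewrite -q0 -qn; apply: walk_connect => i lt_in.
by case/and3P: (qw i lt_in) => eq qiU qSiU; rewrite /induced eq !in_setD1 qiU qSiU !qz //; lia.
Qed.

Lemma biconnected_on_del V z x y : biconnected_on V -> z \in V -> e x y ->
  (forall w, w \in V -> e z w = (w == x) || (w == y)) -> 2 < #|V| -> biconnected_on (V :\ z).
Proof.
move=> [_ _ Vcut] zV exy z_nbrs V_gt2.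
split=> [|a b | w a b]; first by rewrite -card_gt0; move: (cardsD1 z V); rewrite zV; lia.
  by rewrite !in_setD1 => /andP[az aV] /andP[bz bV]; apply: Vcut.
rewrite !in_setD1 => /andP[az aV] /andP[bz bV] aw bw.
case: (eqVneq w z) => [-> | wz].
  by rewrite (_ : _ :\ z = V :\ z) ?Vcut //; apply/setP=> c; rewrite !in_setD1 andbA andbb.
rewrite (_ : _ :\ w = (V :\ w) :\ z); last by apply/setP=> c; rewrite !in_setD1 andbCA.
apply: connect_avoid (Vcut w a b aV bV aw bw) az bz _ => p q /and3P[pz /setD1P[_ pV] _].
case/and3P=> zq _ /setD1P[_ qV]; move: pz zq; rewrite esym !z_nbrs //.
by case/orP=> /eqP-> /orP[]/eqP->; [left | right | right; rewrite esym | left].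
Qed.

Lemma biconnected_on_edge V : biconnected_on V -> 1 < #|V| ->
  exists s t, [/\ s \in V, t \in V & e s t].
Proof.
move=> [/set0Pn[x xV] Vc _] V_gt1.
have /set0Pn[y] : V :\ x != set0 by rewrite -card_gt0; move: (cardsD1 x V); rewrite xV; lia.
rewrite in_setD1 => /andP[yx yV].
have xx : x \in [set x] by rewrite inE.
have yx' : y \notin [set x] by rewrite inE.
by have [s [t [_ _ /and3P[est sV tV]]]] := connect_exit (Vc x y xV yV) xx yx'; exists s, t.
Qed.

Lemma sep_component_of_reach V s t c : c \in V :\: [set s; t] ->
  sep_component V s t (reach (V :\: [set s; t]) c).
Proof.
move=> cW; have sub := subsetP (reach_subset cW).
split=> [x /sub | | x y xK yV exy]; first by rewrite in_setD !inE negb_or => /andP[/andP[-> ->] ->].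
  exact: reach_connected.
case: (boolP (y \in [set s; t])) => [| yst]; first by rewrite !inE => ->; rewrite orbT.
by rewrite (reach_closed xK (sub x xK)) // in_setD yst.
Qed.

Lemma two_tree_of_biconnected_on V : chordal e -> ~ has_K4_minor e -> biconnected_on V ->
  #|V| = 1 \/ two_tree_on e V.
Proof.
move=> ch noK4; move: {2}#|V| (erefl #|V|) => n; elim/ltn_ind: n V => n IHn V Vn bV.
have [V0 _ _] := bV; move: (V0); rewrite -card_gt0 => V_gt0.
have [n_le1 | n_gt1] := leqP n 1; first by left; lia.
have [s [t [sV tV est]]] : exists s t, [/\ s \in V, t \in V & e s t].
  by apply: biconnected_on_edge; rewrite ?Vn.
have st : s != t by apply: contraTneq est => ->; rewrite eirr.
have st_V : [set s; t] \subset V by rewrite subUset !sub1set sV tV.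
have [n2 | n_gt2] : n = 2 \/ 2 < n by lia.
  right; suff -> : V = [set s; t] by apply: tt_base.
  by apply/eqP; rewrite eq_sym eqEcard st_V cards2 st Vn n2.
have [c cW] : exists c, c \in V :\: [set s; t].
  by apply/set0Pn; rewrite -card_gt0 cardsD (setIidPr st_V) cards2 st; lia.
have [m def_n] : exists m, n = m.+3 by exists (n - 3); lia.
have V_gt2 : 2 < #|V| by rewrite Vn def_n.
have [z [x [y [zK xV yV exy z_nbrs]]]] :=
  sep_component_simplicial bV ch noK4 sV tV est (sep_component_of_reach cW).
have zV : z \in V by move: (subsetP (reach_subset cW) z zK); rewrite in_setD => /andP[].
have Vz : #|V :\ z| = m.+2 by move: Vn; rewrite def_n (cardsD1 z V) zV add1n => [[]].
have lt_n : m.+2 < n by rewrite def_n.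
have [|tt] := IHn _ lt_n _ Vz (biconnected_on_del bV zV exy z_nbrs V_gt2); first by rewrite Vz.
have neq_z w : e z w -> w != z by apply: contraTneq => ->; rewrite eirr.
right; rewrite -(setD1K zV); apply: (tt_step (x := x) (y := y)) => //.
- by rewrite in_setD1 xV neq_z // z_nbrs // eqxx.
- by rewrite in_setD1 yV neq_z // z_nbrs // eqxx orbT.
- by rewrite in_setD1 eqxx.
- by move=> w /setD1P[_ wV]; apply: z_nbrs.
Qed.

Lemma biconnected_on_setT : biconnected e -> biconnected_on [set: T].
Proof.
move=> [[T0 Tc] no_cut]; split=> // w x y _ _ xw yw.
rewrite (@eq_connect _ _ (fun a b => [&& e a b, a != w & b != w])); last first.
  by move=> a b; rewrite /induced !in_setD1 !in_setT !andbT.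
by apply/negPn/negP=> nc; apply: (no_cut w); exists x, y.
Qed.

Lemma two_tree_of_chordal : chordal e -> biconnected e -> ~ has_K4_minor e ->
  is_K1 T \/ two_tree e.
Proof.
move=> ch /biconnected_on_setT bT noK4.
by case: (two_tree_of_biconnected_on ch noK4 bT) => [|tt]; [rewrite cardsT; left | right].
Qed.

End ChordalTwoTree.

End Graph.

Theorem lemma5p2 (T : finType) (e : rel T) :
  simple_graph e -> biconnected e -> ~ has_K4_minor e ->
  let P1 := exists v, exists o, one_perfect e o /\ sink o v in
  let P2 := forall v, exists o, one_perfect e o /\ sink o v in
  let P3 := chordal e in
  let P4 := is_K1 T \/ two_tree e in
  [/\ (P1 <-> P2), (P2 <-> P3) & (P3 <-> P4)].
Proof.
move=> [esym eirr] bic noK4 P1 P2 P3 P4.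
have P21 : P2 -> P1.
  by move=> all_v; have [[/set0Pn[v _] _] _] := bic; exists v; apply: all_v.
have P13 : P1 -> P3.
  by case=> v [o [op vsink]]; apply: (chordal_of_one_perfect_sink esym eirr bic.1 noK4 op vsink).
have P34 : P3 -> P4 by move=> ch; apply: two_tree_of_chordal.
have P42 : P4 -> P2.
  by case=> [K1 | tt]; [apply: one_perfect_sink_of_K1 | apply: one_perfect_sink_of_two_tree].
by do !split; auto.
Qed.
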